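(* Fix constants $B>0$, $1\le\Gamma\le 3$, $0<\kappa\le 1$, and fixed Riemann data $\varrho_l>0$, $\varrho_r>0$, $\upsilon_l,\upsilon_r\ge 0$ with $\upsilon_r\le \upsilon_l-\frac{B}{\varrho_l^{\kappa}}$. For parameters $a>0$, $A>0$ (with $a<1/\max(\varrho_l,\varrho_r)$), let $p(\varrho)=A\left(\frac{\varrho}{1-a\varrho}\right)^{\Gamma}-\frac{B}{\varrho^{\kappa}}$, $p_l=p(\varrho_l)$, and let $\varrho_*=\varrho_*(a,A)\in(\varrho_l,1/a)$ be determined by $\upsilon_r=-p(\varrho_* )+\upsilon_l+p_l$. Then $$\lim_{a,A\to 0} A\left(\frac{\varrho_*}{1-a\varrho_*}\right)^{\Gamma}=\upsilon_l-\upsilon_r-\frac{B}{\varrho_l^{\kappa}}.$$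
   Context: $\varrho_*$ is the intermediate density of the shock-plus-contact-discontinuity Riemann solution of the system $\varrho_t+(\varrho\upsilon)_x=0$, $(\varrho(\upsilon+p))_t+(\varrho\upsilon(\upsilon+p))_x=0$ with Riemann data $(\varrho_l,\upsilon_l)$ for $x<0$ and $(\varrho_r,\upsilon_r)$ for $x>0$: the shock connects $(\varrho_l,\upsilon_l)$ to $(\varrho_*,\upsilon_r)$ and the contact discontinuity connects $(\varrho_*,\upsilon_r)$ to $(\varrho_r,\upsilon_r)$. The limit $a,A\to0$ is taken with $B,\Gamma,\kappa$ and the data fixed. *)

From Stdlib Require Import Reals.
Open Scope R_scope.

Definition pres (a A B Gam kap rho : R) : R :=
  A * Rpower (rho / (1 - a * rho)) Gam - B / Rpower rho kap.

(* Substituting the pressure law into the Riemann-invariant relation gives,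
   for rs := rstar a A,
   A (rs/(1 - a rs))^Gam - (ul - ur - B/rl^kap) = A (rl/(1 - a rl))^Gam + B/rs^kap,
   a sum of two positive terms.  The first vanishes with a and A because rl is fixed.
   For the second, rs must escape every bounded set: were rs <= M, the compression
   term on the left would be uniformly small, yet by the identity it dominates
   B/rs^kap >= B/M^kap. *)

From Stdlib Require Import Reals Lra.
Open Scope R_scope.

Lemma Rpower_pos (x y : R) : 0 < Rpower x y.
Proof. apply exp_pos. Qed.

Lemma Rdiv_Rpower_le_contravar (B kap r s : R) :
  0 <= B -> 0 <= kap -> 0 < r <= s -> B / Rpower s kap <= B / Rpower r kap.
Proof.
  intros HB Hkap Hrs.
  apply Rmult_le_compat_l; [exact HB |].
  apply Rinv_le_contravar; [apply Rpower_pos | now apply Rle_Rpower_l].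
Qed.

Lemma Rdiv_Rpower_vanishing (B kap eps : R) :
  0 < B -> 0 < kap -> 0 < eps ->
  exists M, forall r, M <= r -> B / Rpower r kap < eps.
Proof.
  intros HB Hkap Heps.
  assert (H2B : 0 < 2 * B / eps) by (apply Rdiv_lt_0_compat; lra).
  exists (Rpower (2 * B / eps) (/ kap)); intros r Hr.
  assert (HM : Rpower (Rpower (2 * B / eps) (/ kap)) kap = 2 * B / eps).
  { rewrite Rpower_mult, Rinv_l by lra. now apply Rpower_1. }
  apply Rle_lt_trans with (B / Rpower (Rpower (2 * B / eps) (/ kap)) kap).
  - apply Rdiv_Rpower_le_contravar; try lra.
    split; [apply Rpower_pos | exact Hr].
  - rewrite HM. replace (B / (2 * B / eps)) with (eps / 2) by (field; lra). lra.
Qed.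

Lemma Rdiv_one_minus_le_double (a r M : R) :
  0 < a -> 0 < r <= M -> a * (2 * M) <= 1 -> 0 < r / (1 - a * r) <= 2 * M.
Proof.
  intros Ha Hr HaM.
  assert (Hden : 1 / 2 <= 1 - a * r) by nra.
  split.
  - apply Rdiv_lt_0_compat; lra.
  - apply Rle_trans with (r / (1 / 2)).
    + apply Rmult_le_compat_l; [lra |]. apply Rinv_le_contravar; lra.
    + lra.
Qed.

Lemma compression_vanishing (Gam M eps : R) :
  0 <= Gam -> 0 < M -> 0 < eps ->
  exists delta, 0 < delta /\ forall a A r, 0 < a -> 0 < A -> 0 < r <= M ->
    a < delta -> A < delta -> A * Rpower (r / (1 - a * r)) Gam < eps.
Proof.
  intros HGam HM Heps.
  set (Q := Rpower (2 * M) Gam).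
  assert (HQ : 0 < Q) by apply Rpower_pos.
  exists (Rmin (/ (2 * M)) (eps / Q)); split.
  { apply Rmin_pos; [apply Rinv_0_lt_compat; lra | now apply Rdiv_lt_0_compat]. }
  intros a A r Ha HA Hr Had HAd.
  assert (HaM : a * (2 * M) <= 1).
  { apply Rlt_le, Rlt_le_trans with (/ (2 * M) * (2 * M)).
    - apply Rmult_lt_compat_r; [lra |]. eapply Rlt_le_trans; [exact Had | apply Rmin_l].
    - rewrite Rinv_l; lra. }
  assert (HAQ : A * Q < eps).
  { apply Rlt_le_trans with (eps / Q * Q).
    - apply Rmult_lt_compat_r; [exact HQ |].
      eapply Rlt_le_trans; [exact HAd | apply Rmin_r].
    - right; field; lra. }
  apply Rle_lt_trans with (A * Q); [| exact HAQ].
  apply Rmult_le_compat_l; [lra |].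
  apply Rle_Rpower_l; [exact HGam |]. now apply Rdiv_one_minus_le_double.
Qed.

Lemma pres_relation_gap (a A B Gam kap r rl ul ur : R) :
  ur = - pres a A B Gam kap r + ul + pres a A B Gam kap rl ->
  A * Rpower (r / (1 - a * r)) Gam - (ul - ur - B / Rpower rl kap)
  = A * Rpower (rl / (1 - a * rl)) Gam + B / Rpower r kap.
Proof. unfold pres; lra. Qed.

Theorem lemma3p2
  (B Gam kap rl rr ul ur : R)
  (HB : 0 < B) (HG1 : 1 <= Gam) (HG3 : Gam <= 3)
  (Hk0 : 0 < kap) (Hk1 : kap <= 1)
  (Hrl : 0 < rl) (Hrr : 0 < rr) (Hul : 0 <= ul) (Hur : 0 <= ur)
  (Hdata : ur <= ul - B / Rpower rl kap)
  (rstar : R -> R -> R)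
  (Hrstar : forall a A, 0 < a -> 0 < A -> a < / Rmax rl rr ->
     rl < rstar a A /\ rstar a A < / a /\
     ur = - pres a A B Gam kap (rstar a A) + ul + pres a A B Gam kap rl) :
  forall eps, 0 < eps -> exists delta, 0 < delta /\
    forall a A, 0 < a -> 0 < A -> a < / Rmax rl rr ->
      a < delta -> A < delta ->
      Rabs (A * Rpower (rstar a A / (1 - a * rstar a A)) Gam
            - (ul - ur - B / Rpower rl kap)) < eps.
Proof.
  intros eps Heps.
  destruct (Rdiv_Rpower_vanishing B kap (eps / 2)) as [M0 Hfar]; try lra.
  set (M := Rmax M0 rl).
  assert (HM0M : M0 <= M) by apply Rmax_l.
  assert (HrlM : rl <= M) by apply Rmax_r.
  set (c := Rmin (eps / 2) (B / Rpower M kap)).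
  assert (Hc : 0 < c).
  { apply Rmin_pos; [lra | apply Rdiv_lt_0_compat; [lra | apply Rpower_pos]]. }
  destruct (compression_vanishing Gam M c) as [delta [Hdelta Hsmall]]; try lra.
  exists delta; split; [exact Hdelta |].
  intros a A Ha HA Hamax Had HAd.
  destruct (Hrstar a A Ha HA Hamax) as [Hr [_ Hrel]].
  set (r := rstar a A) in *.
  rewrite (pres_relation_gap _ _ _ _ _ _ _ _ _ Hrel).
  assert (Hleft : A * Rpower (rl / (1 - a * rl)) Gam < eps / 2).
  { eapply Rlt_le_trans; [apply Hsmall; lra | apply Rmin_l]. }
  assert (Hleft_pos : 0 < A * Rpower (rl / (1 - a * rl)) Gam).
  { apply Rmult_lt_0_compat; [lra | apply Rpower_pos]. }
  assert (Hright_pos : 0 < B / Rpower r kap).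
  { apply Rdiv_lt_0_compat; [lra | apply Rpower_pos]. }
  assert (Hfar_r : M < r).
  { apply Rnot_le_lt; intros HrM.
    assert (Hcomp : A * Rpower (r / (1 - a * r)) Gam < B / Rpower r kap).
    { eapply Rlt_le_trans; [apply Hsmall; lra |].
      eapply Rle_trans; [apply Rmin_r |].
      apply Rdiv_Rpower_le_contravar; lra. }
    pose proof (pres_relation_gap _ _ _ _ _ _ _ _ _ Hrel); lra. }
  assert (Hright : B / Rpower r kap < eps / 2) by (apply Hfar; lra).
  apply Rabs_def1; lra.
Qed.
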